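(* Let $(\Omega,D,X)$ be a recombination scheme. For every cone $\rho$ of $D$ with apex $\tau$ and legs $\rho_i:\tau\to\theta(i)$, $i\in[k]$, the canonical morphism $DX(\tau)\to\prod_{i\in[k]}DX(\theta(i))$, whose components are the maps $DX(\rho_i)$, is a monomorphism in $\mathbf{Icm}$.
   Context: For $n\ge1$, $[n]=\{1,\dots,n\}$ ordered as usual, $[0]=\emptyset$. For a pre-ordered set $(\Omega,\preceq)$, a segment is a pair $(t,c)$ with $t:[n_1]\to[n_0]$ an order-preserving surjection and $c:[n_0]\to\Omega$; its domain is $[n_1]$. A morphism $(t,c)\to(t',c')$ is a pair $(f_1,f_0)$, $f_1:[n_1]\to[n_1']$ an order-preserving injection, $f_0:[n_0]\to[n_0']$ order-preserving, with $t'f_1=f_0t$ and $c'(f_0(i))\preceq c(i)$ for all $i$; this gives the category $\mathbf{Seg}(\Omega)$. $\mathbf{Seg}(\Omega\,|\,n)$ is the subcategory of segments of domain $[n]$ and morphisms with $f_1=\mathrm{id}$. A wide span is a finite family of arrows $\rho_i:\tau\to\theta(i)$, $i\in[k]$, with common domain (apex) $\tau$. A recombination chromology $(\Omega,D)$ is a pre-ordered set $\Omega$ with, for every $n\ge0$, a finite set $D[n]$ of wide spans in $\mathbf{Seg}(\Omega\,|\,n)$ (the cones of $D$). $\mathbf{Icm}$ is the category of idempotent commutative monoids and monoid morphisms. For a functor $X:\mathbf{Seg}(\Omega)\to\mathbf{Icm}$ and a cone $\rho$ of $D$ with apex $\upsilon$ and legs $\rho_i:\upsilon\to\theta(i)$,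 $X[\rho]:X(\upsilon)\to\prod_iX(\theta(i))$ has components $X(\rho_i)$, and $\mathsf{prj}_1,\mathsf{prj}_2:G(X,\rho)\rightrightarrows X(\upsilon)$ is the pullback of $X[\rho]$ along itself. The recombination monoid $DX:\mathbf{Seg}(\Omega)\to\mathbf{Icm}$: for each $\tau$, $q_X:X(\tau)\to DX(\tau)$ is the universal morphism in $\mathbf{Icm}$ out of $X(\tau)$ satisfying $q_X\circ X(f)\circ\mathsf{prj}_1=q_X\circ X(f)\circ\mathsf{prj}_2$ for every cone $\rho$ of $D$ (with apex $\upsilon$) and every arrow $f:\upsilon\to\tau$ in $\mathbf{Seg}(\Omega)$ (i.e. the coequalizer of the induced pair out of the coproduct of the $G(X,\rho)$); for $g:\tau\to\tau'$, $DX(g)$ is the unique morphism with $DX(g)\circ q_X=q_X\circ X(g)$. An object $\sigma$ is irreducible for $(\Omega,D,X)$ if for every arrow $f:\upsilon\to\sigma$ and every cone $\rho$ of $D$ with apex $\upsilon$, $X(f)\circ\mathsf{prj}_1=X(f)\circ\mathsf{prj}_2$ on $G(X,\rho)$. A recombination scheme is a triple $(\Omega,D,X)$ with $(\Omega,D)$ a recombination chromology and $X:\mathbf{Seg}(\Omega)\to\mathbf{Icm}$ a functor such that for every cone $\rho$ of $D$ with legs $\rho_i:\tau\to\theta(i)$, every $\theta(i)$ is irreducible for $(\Omega,D,X)$. *)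

From HB Require Import structures.
From mathcomp Require Import all_boot.
From Stdlib Require Import FunctionalExtensionality.
From Stdlib Require List.

Set Implicit Arguments.
Unset Strict Implicit.
Unset Printing Implicit Defensive.

Record icm := ICM {
  icm_car :> Type;
  icm_op : icm_car -> icm_car -> icm_car;
  icm_e : icm_car;
  icm_opA : forall x y z, icm_op x (icm_op y z) = icm_op (icm_op x y) z;
  icm_opC : forall x y, icm_op x y = icm_op y x;
  icm_op1 : forall x, icm_op icm_e x = x;
  icm_opI : forall x, icm_op x x = x }.

Record icm_hom (M N : icm) := IcmHom {
  ih_fun :> M -> N;
  ih_op : forall x y, ih_fun (icm_op x y) = icm_op (ih_fun x) (ih_fun y);
  ih_e : ih_fun (icm_e M) = icm_e N }.

Definition icm_mono (M N : icm) (u : icm_hom M N) : Prop :=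
  forall (P : icm) (g h : icm_hom P M),
    (forall x, u (g x) = u (h x)) -> forall x, g x = h x.

Section Product.
Variables (k : nat) (F : 'I_k -> icm).

Definition prod_op (x y : forall i, F i) : forall i, F i :=
  fun i => icm_op (x i) (y i).
Definition prod_e : forall i, F i := fun i => icm_e (F i).

Lemma prod_opA x y z : prod_op x (prod_op y z) = prod_op (prod_op x y) z.
Proof. apply: functional_extensionality_dep => i; exact: icm_opA. Qed.
Lemma prod_opC x y : prod_op x y = prod_op y x.
Proof. apply: functional_extensionality_dep => i; exact: icm_opC. Qed.
Lemma prod_op1 x : prod_op prod_e x = x.
Proof. apply: functional_extensionality_dep => i; exact: icm_op1. Qed.
Lemma prod_opI x : prod_op x x = x.
Proof. apply: functional_extensionality_dep => i; exact: icm_opI. Qed.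

Definition prod_icm : icm := ICM prod_opA prod_opC prod_op1 prod_opI.

Variables (M : icm) (u : forall i, icm_hom M (F i)).

Definition tuple_fun (x : M) : prod_icm := fun i => u i x.
Lemma tuple_fun_op x y :
  tuple_fun (icm_op x y) = icm_op (tuple_fun x) (tuple_fun y).
Proof. apply: functional_extensionality_dep => i; exact: ih_op. Qed.
Lemma tuple_fun_e : tuple_fun (icm_e M) = icm_e prod_icm.
Proof. apply: functional_extensionality_dep => i; exact: ih_e. Qed.

Definition tuple_hom : icm_hom M prod_icm := IcmHom tuple_fun_op tuple_fun_e.
End Product.

(* [n] = {1,..,n} is represented by 'I_n = {0,..,n-1} (same order).   *)

Record preord := Preord {
  po_car :> Type;
  po_le : po_car -> po_car -> Prop;
  po_refl : forall x, po_le x x;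
  po_trans : forall x y z, po_le x y -> po_le y z -> po_le x z }.

Definition ord_monotone n m (f : 'I_n -> 'I_m) : Prop :=
  forall i j : 'I_n, i <= j -> f i <= f j.

Section Seg.
Variable Om : preord.

(* A segment (t, c): t : [n1] -> [n0] order-preserving surjection,
   c : [n0] -> Omega; its domain is [n1] = [sdom]. *)
Record segment := Segment {
  sdom : nat;
  scod : nat;
  st : 'I_sdom -> 'I_scod;
  st_mono : ord_monotone st;
  st_surj : forall j, exists i, st i = j;
  sc : 'I_scod -> Om }.

Record seg_hom (s s' : segment) := SegHom {
  f1 : 'I_(sdom s) -> 'I_(sdom s');
  f0 : 'I_(scod s) -> 'I_(scod s');
  f1_mono : ord_monotone f1;
  f1_inj : injective f1;
  f0_mono : ord_monotone f0;
  f_comm : forall i, @st s' (f1 i) = f0 (@st s i);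
  f_col : forall i, po_le (@sc s' (f0 i)) (@sc s i) }.

Definition seg_id (s : segment) : seg_hom s s.
Proof.
refine (@SegHom s s id id _ _ _ _ _) => //.
move=> i; exact: po_refl.
Defined.

Definition seg_comp (s s' s'' : segment) (f : seg_hom s s') (g : seg_hom s' s'')
  : seg_hom s s''.
Proof.
refine (@SegHom s s'' (f1 g \o f1 f) (f0 g \o f0 f) _ _ _ _ _).
- by move=> i j ij; apply: f1_mono; apply: f1_mono.
- exact: inj_comp (@f1_inj _ _ g) (@f1_inj _ _ f).
- by move=> i j ij; apply: f0_mono; apply: f0_mono.
- by move=> i /=; rewrite f_comm f_comm.
- by move=> i /=; apply: po_trans (f_col g (f0 f i)) (f_col f i).
Defined.

(* Functors Seg(Omega) -> Icm.  Since a morphism of Seg(Omega) is the pair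
   (f1, f0) (the other record fields are proofs), the morphism action is
   required to depend only on (f1, f0). *)
Record seg_functor := SegFunctor {
  Fo : segment -> icm;
  Fm : forall s s', seg_hom s s' -> icm_hom (Fo s) (Fo s');
  Fm_ext : forall s s' (f g : seg_hom s s'),
      f1 f =1 f1 g -> f0 f =1 f0 g -> forall x, Fm f x = Fm g x;
  Fm_id : forall s x, Fm (seg_id s) x = x;
  Fm_comp : forall s s' s'' (f : seg_hom s s') (g : seg_hom s' s'') x,
      Fm (seg_comp f g) x = Fm g (Fm f x) }.

(* A wide span in Seg(Omega | n): apex and targets of domain [n], legs
   with f1 = id.  Legs are indexed by [k] = 'I_arity. *)
Record cone (n : nat) := Cone {
  apex : segment;
  arity : nat;
  target : 'I_arity -> segment;
  leg : forall i, seg_hom apex (target i);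
  apex_dom : sdom apex = n;
  target_dom : forall i, sdom (target i) = n;
  leg_id : forall i j, val (f1 (leg i) j) = val j }.

(* A recombination chromology on Omega: finitely many cones D[n] for each n. *)
Arguments leg {n} c i.
Arguments target {n} c i.

Definition chromology := forall n : nat, list (cone n).

Definition is_cone (D : chromology) n (rho : cone n) : Prop := List.In rho (D n).

Section WithX.
Variables (X : seg_functor) (D : chromology).

(* (a, b) in the pullback G(X, rho) of X[rho] along itself. *)
Definition in_G n (rho : cone n) (a b : Fo X (apex rho)) : Prop :=
  forall i, Fm X (leg rho i) a = Fm X (leg rho i) b.

Definition irreducible (sigma : segment) : Prop :=
  forall n (rho : cone n), is_cone D rho ->
  forall (f : seg_hom (apex rho) sigma) a b,
    in_G a b -> Fm X f a = Fm X f b.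

Definition recombination_scheme : Prop :=
  forall n (rho : cone n), is_cone D rho ->
  forall i, irreducible (target rho i).

Definition recomb_compatible (sigma : segment) (M : icm)
  (h : icm_hom (Fo X sigma) M) : Prop :=
  forall n (rho : cone n), is_cone D rho ->
  forall (f : seg_hom (apex rho) sigma) a b,
    in_G a b -> h (Fm X f a) = h (Fm X f b).

Definition is_recomb_quotient (sigma : segment) (Q : icm)
  (q : icm_hom (Fo X sigma) Q) : Prop :=
  recomb_compatible q /\
  forall (M : icm) (h : icm_hom (Fo X sigma) M), recomb_compatible h ->
    (exists u : icm_hom Q M, forall x, u (q x) = h x) /\
    (forall u u' : icm_hom Q M,
        (forall x, u (q x) = h x) -> (forall x, u' (q x) = h x) ->
        forall y, u y = u' y).

(* The recombination monoid DX (determined up to unique isomorphism by its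
   universal property): objects DX(tau) with universal q_X, and the arrow
   action DX(g) characterised by DX(g) o q_X = q_X o X(g). *)
Record recomb_monoid := RecombMonoid {
  DXo : segment -> icm;
  qX : forall s, icm_hom (Fo X s) (DXo s);
  qX_univ : forall s, is_recomb_quotient (qX s);
  DXm : forall s s', seg_hom s s' -> icm_hom (DXo s) (DXo s');
  DXm_q : forall s s' (g : seg_hom s s') x,
      DXm g (qX s x) = qX s' (Fm X g x) }.

End WithX.
End Seg.

Arguments leg {Om n} c i.
Arguments target {Om n} c i.
Arguments apex {Om n} c.
Arguments arity {Om n} c.

(* The universal morphism q : X(sigma) -> DX(sigma) is always surjective, since it
   factors through its own image and the factorisation is unique; and it is
   injective when sigma is irreducible, since then the identity of X(sigma) is
   already compatible and factors through q.  So if two elements of DX(tau) have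
   equal images under every DX(rho_i), lift them to a, b in X(tau); injectivity of
   q at the irreducible targets gives X(rho_i) a = X(rho_i) b for all i, i.e.
   (a, b) lies in G(X, rho), and compatibility of q with rho (along the identity
   of tau) yields q a = q b. *)
From mathcomp Require Import all_boot.
From Stdlib Require Import ProofIrrelevance.

Set Implicit Arguments.
Unset Strict Implicit.
Unset Printing Implicit Defensive.

Definition icm_id (M : icm) : icm_hom M M :=
  @IcmHom M M id (fun _ _ => erefl) erefl.

Section Composition.
Variables (M N P : icm) (u : icm_hom M N) (v : icm_hom N P).

Lemma icm_comp_op x y : v (u (icm_op x y)) = icm_op (v (u x)) (v (u y)).
Proof. by rewrite !ih_op. Qed.

Lemma icm_comp_e : v (u (icm_e M)) = icm_e P.
Proof. by rewrite !ih_e. Qed.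

Definition icm_comp : icm_hom M P := IcmHom icm_comp_op icm_comp_e.
End Composition.

Lemma icm_mono_inj (M N : icm) (u : icm_hom M N) : injective u -> icm_mono u.
Proof. by move=> u_inj P g h ugh x; apply: u_inj. Qed.

Section Image.
Variables (A Q : icm) (q : icm_hom A Q).

Definition image_car := {y : Q | exists a, q a = y}.

Definition image_op (x y : image_car) : image_car.
Proof.
exists (icm_op (sval x) (sval y)).
case: x => [x [a qa]]; case: y => [y [b qb]] /=.
by exists (icm_op a b); rewrite ih_op qa qb.
Defined.

Definition image_e : image_car.
Proof. by exists (icm_e Q); exists (icm_e A); rewrite ih_e. Defined.

Lemma image_opA x y z : image_op x (image_op y z) = image_op (image_op x y) z.
Proof. exact/subset_eq_compat/icm_opA. Qed.

Lemma image_opC x y : image_op x y = image_op y x.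
Proof. exact/subset_eq_compat/icm_opC. Qed.

Lemma image_op1 x : image_op image_e x = x.
Proof. by case: x => x xP; apply/subset_eq_compat/icm_op1. Qed.

Lemma image_opI x : image_op x x = x.
Proof. by case: x => x xP; apply/subset_eq_compat/icm_opI. Qed.

Definition image_icm : icm := ICM image_opA image_opC image_op1 image_opI.

Definition corestr_fun (a : A) : image_icm := exist _ (q a) (ex_intro _ a erefl).

Lemma corestr_op x y :
  corestr_fun (icm_op x y) = icm_op (corestr_fun x) (corestr_fun y).
Proof. exact/subset_eq_compat/ih_op. Qed.

Lemma corestr_e : corestr_fun (icm_e A) = icm_e image_icm.
Proof. exact/subset_eq_compat/ih_e. Qed.

Definition corestr : icm_hom A image_icm := IcmHom corestr_op corestr_e.

Definition image_incl : icm_hom image_icm Q :=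
  @IcmHom image_icm Q sval (fun _ _ => erefl) erefl.
End Image.

Section RecombQuotient.
Variables (Om : preord) (X : seg_functor Om) (D : chromology Om).
Variables (s : segment Om) (Q : icm) (q : icm_hom (Fo X s) Q).
Hypothesis q_univ : is_recomb_quotient D q.

Lemma recomb_quotient_surj y : exists a, q a = y.
Proof.
have [q_comp q_fact] := q_univ.
have corestr_comp : recomb_compatible D (corestr q).
  by move=> n rho rhoD f a b Gab; apply/subset_eq_compat/q_comp.
have [[v vq] _] := q_fact _ _ corestr_comp.
have vK : forall y, image_incl q (v y) = y.
  apply: (proj2 (q_fact _ _ q_comp) (icm_comp v (image_incl q)) (icm_id Q)) => //.
  by move=> x /=; rewrite vq.
by rewrite -(vK y); exact: svalP (v y).
Qed.

Lemma recomb_quotient_inj : irreducible X D s -> injective q.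
Proof.
move=> s_irr a b qab.
have [_ q_fact] := q_univ.
have [[r rq] _] := q_fact _ (icm_id (Fo X s)) s_irr.
by have := congr1 r qab; rewrite !rq.
Qed.
End RecombQuotient.

Lemma recomb_compatible_in_G (Om : preord) (X : seg_functor Om) (D : chromology Om)
    n (rho : cone Om n) (Q : icm) (q : icm_hom (Fo X (apex rho)) Q) :
  recomb_compatible D q -> is_cone D rho ->
  forall a b : Fo X (apex rho), in_G a b -> q a = q b.
Proof.
move=> q_comp rhoD a b Gab.
by have := q_comp _ rho rhoD (seg_id _) a b Gab; rewrite !Fm_id.
Qed.

Lemma recomb_legs_inj (Om : preord) (X : seg_functor Om) (D : chromology Om)
    (DX : recomb_monoid X D) n (rho : cone Om n) :
  recombination_scheme X D -> is_cone D rho ->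
  injective (tuple_hom (fun i : 'I_(arity rho) => DXm DX (leg rho i))).
Proof.
move=> scheme rhoD y z.
have [a <-] := recomb_quotient_surj (qX_univ DX (apex rho)) y.
have [b <-] := recomb_quotient_surj (qX_univ DX (apex rho)) z.
move=> legs_ab; apply: (recomb_compatible_in_G (proj1 (qX_univ DX _)) rhoD) => i.
apply: recomb_quotient_inj (qX_univ DX _) (scheme _ _ rhoD i) _ _ _.
by rewrite -!DXm_q; exact: (congr1 (fun t => t i) legs_ab).
Qed.

Theorem mainTheorem8 (Om : preord) (X : seg_functor Om) (D : chromology Om)
  (DX : recomb_monoid X D) :
  recombination_scheme X D ->
  forall (n : nat) (rho : cone Om n), is_cone D rho ->
  icm_mono (tuple_hom (fun i : 'I_(arity rho) => DXm DX (leg rho i))).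
Proof.
move=> scheme n rho rhoD.
exact/icm_mono_inj/recomb_legs_inj.
Qed.
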